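(* Consider the factor (Tanner) graph of an LDPC code decoded by the binary message-passing decoder described in the context. Let $C$ be a cycle in the factor graph all of whose variable nodes have degree two or three. Assume that the channel messages associated with the variable nodes of $C$ are in error, and that all other incoming messages at the check nodes of $C$ (i.e. those not arriving along edges of $C$) are correct. Then the variable nodes forming the cycle cannot be corrected by the binary message-passing decoder: in every iteration the messages they send along the edges of $C$ remain in error.
   Context: Transmitted bits are represented in $\{+1,-1\}$ and a message is ''in error'' if its sign differs from the transmitted bit of the corresponding variable node. All messages between variable and check nodes are binary ($\pm1$). In the first iteration each variable node sends its channel hard decision. A check node sends on each edge the product of the messages received on its other edges. A variable node of degree $d_v$ with channel L-value $L_{ch}=y D_{ch}$ ($y\in\{\pm1\}$ the channel hard decision, $D_{ch}>0$ its reliability) and incoming check messages $a_i\in\{\pm1\}$, all converted to L-values $a_iD_{av}$ with a common reliability $D_{av}>0$ in a given iteration, sends on edge $j$ the sign of $L_{ev,j}=L_{ch}+\sum_{i\ne j}a_iD_{av}$. *)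

From HB Require Import structures.
From mathcomp Require Import all_boot all_order all_algebra.
Set Implicit Arguments. Unset Strict Implicit. Unset Printing Implicit Defensive.
Import Order.TTheory GRing.Theory Num.Theory.
Local Open Scope ring_scope.

(* Bits / binary messages are elements of R taking values +1 or -1. *)
Definition pm1 {R : realFieldType} (a : R) : Prop := a = 1 \/ a = -1.

(* Hard decision (sign) of an L-value; tie convention: sign 0 = +1. *)
Definition hard {R : realFieldType} (L : R) : R := if L < 0 then -1 else 1.

Section Decoder.
Variables (R : realFieldType) (V C : finType) (adj : V -> C -> bool).

Definition vdeg (v : V) : nat := #|[set c | adj v c]|.

(* x is a codeword: every parity check is satisfied (product of +-1 bits is 1) *)
Definition is_codeword (x : V -> R) : Prop :=
  forall c : C, \prod_(v | adj v c) x v = 1.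

Definition check_out (mvc : V -> C -> R) (c : C) (v : V) : R :=
  \prod_(v' | adj v' c && (v' != v)) mvc v' c.

(* variable-to-check messages in iteration t (t = 0 is the first iteration):
   y = channel hard decisions, Dch = channel reliability,
   Dav t = common reliability of check messages used in iteration t.+1 *)
Fixpoint msg_vc (y : V -> R) (Dch : R) (Dav : nat -> R) (t : nat) : V -> C -> R :=
  match t with
  | 0 => fun v _ => y v
  | t'.+1 => fun v c =>
      hard (Dch * y v +
            \sum_(c' | adj v c' && (c' != c))
               check_out (msg_vc y Dch Dav t') c' v * Dav t')
  end.

End Decoder.

From HB Require Import structures.
From mathcomp Require Import all_boot all_order all_algebra.
From mathcomp Require Import zify ring lra.
Import Order.TTheory GRing.Theory Num.Theory.
Local Open Scope ring_scope.

(* A check node of the cycle sees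
   exactly one wrong incoming message (from its other cycle neighbour) and
   correct ones elsewhere, so its parity check sends a wrong message to the
   next cycle variable.  That variable has at most one further check, whose
   contribution has weight at most Dav; its wrong channel value together with
   the wrong message from the cycle outweighs it, so the hard decision stays
   wrong. *)

Lemma pm1M (R : realFieldType) (a b : R) : pm1 a -> pm1 b -> pm1 (a * b).
Proof. by case=> ->; case=> ->; rewrite /pm1; [left|right|right|left]; ring. Qed.

Lemma pm1_hard (R : realFieldType) (L : R) : pm1 (hard L).
Proof. by rewrite /hard /pm1; case: ifP; [right|left]. Qed.

Lemma hard_dominant (R : realFieldType) (s a r : R) :
  pm1 s -> `|r| < a -> hard (s * a + r) = s.
Proof.
rewrite ltr_norml /hard => + /andP[ra ar].
by case=> ->; case: ifP => H; try lra; move/negbT: H; rewrite -leNgt => H; lra.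
Qed.

Lemma norm_sum_card_le1 (R : realFieldType) (I : finType) (B : {set I})
    (F : I -> R) (d : R) :
  (#|B| <= 1)%N -> 0 <= d -> (forall i, `|F i| <= d) -> `|\sum_(i in B) F i| <= d.
Proof.
move=> B_le1 d_ge0 F_le; have [/eqP|B_gt0] := posnP #|B|.
  by rewrite cards_eq0 => /eqP ->; rewrite big_set0 normr0.
have /cards1P [a ->] : #|B| == 1%N by rewrite eqn_leq B_le1.
by rewrite big_set1.
Qed.

Lemma ordS_neq (k : nat) (i : 'I_k) : (1 < k)%N -> ordS i != i.
Proof.
move=> k_gt1; apply/eqP => /(congr1 val) /=; have := ltn_ord i.
case: (ltngtP i.+1 k) => [ilt|//|iSk]; first by rewrite modn_small //; lia.
by rewrite iSk modnn; lia.
Qed.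

Section Decoder.
Variables (R : realFieldType) (V C : finType) (adj : V -> C -> bool).

Lemma card_other_checks (v : V) (c c0 : C) :
  (vdeg adj v <= 3)%N -> adj v c -> adj v c0 -> c0 != c ->
  (#|[set c' | adj v c' && (c' != c) && (c' != c0)]| <= 1)%N.
Proof.
move=> deg_le3 vc vc0 c0c.
pose A := [set c' | adj v c'].
have -> : [set c' | adj v c' && (c' != c) && (c' != c0)] = A :\ c :\ c0.
  by apply/setP => z; rewrite !inE; case: (adj v z); case: (z != c); case: (z != c0).
have degA : #|A| = vdeg adj v by [].
have := cardsD1 c A; have := cardsD1 c0 (A :\ c).
rewrite !inE vc vc0 c0c; lia.
Qed.

Lemma pm1_check_out (m : V -> C -> R) (c : C) (v : V) :
  (forall v c, pm1 (m v c)) -> pm1 (check_out adj m c v).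
Proof.
move=> m_pm1; apply: (big_ind (fun a => pm1 a)) => //; first by left.
exact: pm1M.
Qed.

Variables (y : V -> R) (Dch : R) (Dav : nat -> R).
Hypothesis y_pm1 : forall v, pm1 (y v).

Lemma pm1_msg_vc (t : nat) (v : V) (c : C) : pm1 (msg_vc adj y Dch Dav t v c).
Proof. by case: t => [|t] /=; [apply: y_pm1 | apply: pm1_hard]. Qed.

Variable x : V -> R.
Hypotheses (x_pm1 : forall v, pm1 (x v)) (x_codeword : is_codeword adj x).

(* The parity check forces the product of all bits at [c] to be 1, so one
   flipped incoming message flips every outgoing one. *)
Lemma check_out_single_error (m : V -> C -> R) (c : C) (w u : V) :
  adj w c -> adj u c -> u != w -> m u c = - x u ->
  (forall v, adj v c -> v != w -> v != u -> m v c = x v) ->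
  check_out adj m c w = - x w.
Proof.
move=> wc uc uw mu_err m_ok; have parity := x_codeword c.
rewrite (bigD1 w) //= (bigD1 u) /= in parity; last by rewrite uc uw.
rewrite /check_out (bigD1 u) /=; last by rewrite uc uw.
set Q := \prod_(i | _) x i in parity.
have -> : \prod_(i | adj i c && (i != w) && (i != u)) m i c = Q.
  by apply: eq_bigr => i /andP [/andP [ic iw] iu]; apply: m_ok.
by rewrite mu_err; case: (x_pm1 w) parity => ->; case: (x_pm1 u) => -> parity; lra.
Qed.

Lemma msg_vc_error_step (t : nat) (u v : V) (c c' : C) :
  0 < Dch -> 0 < Dav t -> (vdeg adj v <= 3)%N -> y v = - x v ->
  adj u c -> adj v c -> u != v -> adj v c' -> c' != c ->
  msg_vc adj y Dch Dav t u c = - x u ->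
  (forall w, adj w c -> w != v -> w != u -> msg_vc adj y Dch Dav t w c = x w) ->
  msg_vc adj y Dch Dav t.+1 v c' = - x v.
Proof.
move=> Dch_gt0 Dav_gt0 deg_le3 yv_err uc vc uv vc' cc' mu_err m_ok /=.
have co_err : check_out adj (msg_vc adj y Dch Dav t) c v = - x v.
  exact: check_out_single_error uc uv mu_err m_ok.
rewrite (bigD1 c) /=; last by rewrite vc eq_sym cc'.
set r := \sum_(i | _) _.
have r_small : `|r| <= Dav t.
  rewrite /r (eq_bigl (fun c'' =>
      c'' \in [set c'' | adj v c'' && (c'' != c') && (c'' != c)])); last first.
    by move=> z; rewrite inE.
  apply: norm_sum_card_le1; [by apply: card_other_checks; rewrite // eq_sym | exact: ltW |].
  move=> i; rewrite normrM (gtr0_norm Dav_gt0).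
  have [] := pm1_check_out _ i v (pm1_msg_vc t) => ->; by rewrite ?normrN normr1 mul1r.
have -> : Dch * y v + (check_out adj (msg_vc adj y Dch Dav t) c v * Dav t + r)
        = - x v * (Dch + Dav t) + r by rewrite yv_err co_err; ring.
by apply: hard_dominant; [case: (x_pm1 v) => ->; rewrite /pm1 ?opprK; auto | lra].
Qed.

End Decoder.

Theorem theorem3 (R : realFieldType) (V C : finType) (adj : V -> C -> bool)
  (x y : V -> R) (Dch : R) (Dav : nat -> R)
  (k : nat) (vs : 'I_k -> V) (cs : 'I_k -> C) :
  (* transmitted codeword and channel hard decisions, all in {+1,-1} *)
  (forall v, pm1 (x v)) -> (forall v, pm1 (y v)) -> is_codeword adj x ->
  (* reliabilities *)
  0 < Dch -> (forall t, 0 < Dav t) ->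
  (* the cycle v_0 c_0 v_1 c_1 ... v_{k-1} c_{k-1} v_0 *)
  (2 <= k)%N -> injective vs -> injective cs ->
  (forall i, adj (vs i) (cs i) /\ adj (vs (ordS i)) (cs i)) ->
  (* variable nodes of the cycle have degree 2 or 3 *)
  (forall i, vdeg adj (vs i) = 2%N \/ vdeg adj (vs i) = 3%N) ->
  (* channel messages of the cycle's variable nodes are in error *)
  (forall i, y (vs i) = - x (vs i)) ->
  (* all incoming messages at the cycle's check nodes along non-cycle edges are correct *)
  (forall t i v, adj v (cs i) -> v != vs i -> v != vs (ordS i) ->
     msg_vc adj y Dch Dav t v (cs i) = x v) ->
  (* conclusion: in every iteration the messages sent along the cycle edges are in error *)
  forall t i,
    msg_vc adj y Dch Dav t (vs i) (cs i) = - x (vs i) /\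
    msg_vc adj y Dch Dav t (vs (ordS i)) (cs i) = - x (vs (ordS i)).
Proof.
move=> x_pm1 y_pm1 x_cw Dch_gt0 Dav_gt0 k_ge2 vs_inj cs_inj adj_cycle deg23 y_err
  others_ok t.
have deg_le3 i : (vdeg adj (vs i) <= 3)%N by case: (deg23 i) => ->.
have vsS_neq i : vs (ordS i) != vs i by rewrite (inj_eq vs_inj) ordS_neq.
have csS_neq i : cs (ordS i) != cs i by rewrite (inj_eq cs_inj) ordS_neq.
elim: t => [|t IH] i; first by rewrite /= !y_err.
have step u v c c' := @msg_vc_error_step _ _ _ adj y Dch Dav y_pm1 x x_pm1 x_cw
  t u v c c' Dch_gt0 (Dav_gt0 t).
split.
- rewrite -[i]ord_predK; set p := ord_pred i.
  apply: step (deg_le3 _) (y_err _) (adj_cycle p).1 (adj_cycle p).2 _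
    (adj_cycle _).1 (csS_neq p) (IH p).1 _; first by rewrite eq_sym vsS_neq.
  by move=> w wc w1 w2; apply: others_ok.
- apply: step (deg_le3 _) (y_err _) (adj_cycle (ordS i)).2 (adj_cycle (ordS i)).1
    (vsS_neq _) (adj_cycle i).2 _ (IH (ordS i)).2 _; first by rewrite eq_sym csS_neq.
  by move=> w wc w1 w2; apply: others_ok.
Qed.
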